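(* Let $H=[H_1,\dots,H_N]'$ be a function $\mathbb{R}^m\to\mathbb{R}^N$ each of whose components is convex, and let $\mathcal{A}=\{1,\dots,N\}$. Assume there exist $u^*\in\mathbb{R}^m$ and a set $\mathcal{G}\subset\mathcal{A}$ with $|\mathcal{G}|\ge2$ such that (a) $H_i(u^* )=\max_{1\le j\le N}H_j(u^* )$ for all $i\in\mathcal{G}$; (b) for all $u\ne u^*$ there exists $i\in\mathcal{G}$ such that $H_i(u)>H_i(u^* )$; (c) $u^*$ is not a minimum of any $H_i$, $i\in\mathcal{G}$. Then there exists a non-pure vector $p^*\in\mathcal{S}_{N-1}$ with support $I(p^* )\subseteq\mathcal{G}$ such that \[ \inf_{u\in\mathbb{R}^m}\sup_{p\in\mathcal{S}_{N-1}}p'H(u)=(p^* )'H(u^* )=\sup_{p\in\mathcal{S}_{N-1}}\inf_{u\in\mathbb{R}^m}p'H(u). \]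
   Context: $\mathcal{S}_{N-1}=\{p\in\mathbb{R}^N:0\le p_j\le1,\sum_{j=1}^Np_j=1\}$ is the unit simplex. The support of $p$ is $I(p)=\{i:p_i>0\}$. A vector $p\in\mathcal{S}_{N-1}$ is non-pure if it is not a vertex of $\mathcal{S}_{N-1}$, i.e., it has at least two positive components. *)

From HB Require Import structures.
From mathcomp Require Import all_boot all_order all_algebra.
From mathcomp Require Import all_classical all_reals ereal.
Set Implicit Arguments. Unset Strict Implicit. Unset Printing Implicit Defensive.
Import Order.TTheory GRing.Theory Num.Theory.
Local Open Scope ring_scope.
Local Open Scope classical_set_scope.

Definition convex_fun (R : realType) (m : nat) (f : 'rV[R]_m -> R) : Prop :=
  forall (x y : 'rV[R]_m) (t : R), 0 <= t -> t <= 1 ->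
    f (t *: x + (1 - t) *: y) <= t * f x + (1 - t) * f y.

Definition simplex (R : realType) (N : nat) : set 'rV[R]_N :=
  [set p | (forall j : 'I_N, 0 <= p 0 j <= 1) /\ \sum_(j < N) p 0 j = 1].

Definition pdot (R : realType) (m N : nat) (p : 'rV[R]_N)
  (H : 'I_N -> 'rV[R]_m -> R) (u : 'rV[R]_m) : R :=
  \sum_(j < N) p 0 j * H j u.

Definition supp (R : realType) (N : nat) (p : 'rV[R]_N) : {set 'I_N} :=
  [set i | 0 < p 0 i].

Definition non_pure (R : realType) (N : nat) (p : 'rV[R]_N) : Prop :=
  exists i j : 'I_N, i != j /\ 0 < p 0 i /\ 0 < p 0 j.

From HB Require Import structures.
From mathcomp Require Import all_boot all_order all_algebra.
From mathcomp Require Import all_classical all_reals ereal.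
From mathcomp Require Import ring lra.
Import Order.TTheory GRing.Theory Num.Theory.
Local Open Scope ring_scope.
Local Open Scope classical_set_scope.
Set Implicit Arguments. Unset Strict Implicit. Unset Printing Implicit Defensive.

(* At u* every index of G attains the common maximum c, and (b) says that
   the convex functions H_i - c, i in G, have a nonnegative maximum
   everywhere.  By a theorem of alternatives some convex combination p* of
   them is nonnegative everywhere, so the pair p*, u* is a saddle point of
   p'H(u) with value c.  The theorem of alternatives goes by induction on the
   number of functions: if two convex functions f, g have a nonnegative
   maximum on a convex set D, then so does some fixed combination
   l f + (1 - l) g (take for l the supremum of the weights cancelling the
   combination at points where g < 0; convexity along segments keeps it below
   the weights cancelling it where f < 0).  Applied on the convex set where
   all other functions are negative, this merges two functions into one.
   Finally p* is not a vertex e_i, for then u* would minimize H_i, against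
   (c). *)

Lemma affine_cover_cross_le (R : realFieldType) (fa fb ga gb : R) :
  fa < 0 -> 0 <= fb -> gb < 0 -> 0 <= ga ->
  (forall t, 0 <= t <= 1 ->
     0 <= t * fa + (1 - t) * fb \/ 0 <= t * ga + (1 - t) * gb) ->
  gb * fa <= fb * ga.
Proof.
move=> fa_lt0 fb_ge0 gb_lt0 ga_ge0 cover; rewrite leNgt; apply/negP => cross.
have df_gt0 : 0 < fb - fa by lra.
have dg_gt0 : 0 < ga - gb by lra.
(* Both combinations are negative strictly between their roots [tf] and [tg]. *)
pose tf := fb / (fb - fa); pose tg := - gb / (ga - gb).
have tf_lt_tg : tf < tg by rewrite ltr_pdivrMr // mulrAC ltr_pdivlMr //; nra.
have [tf_lt_t t_lt_tg] := midf_lt tf_lt_tg.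
set t := (tf + tg) / 2 in tf_lt_t t_lt_tg.
have t_ge0 : 0 <= t by apply/ltW/(le_lt_trans _ tf_lt_t); rewrite divr_ge0 // ltW.
have t_le1 : t <= 1 by apply/ltW/(lt_le_trans t_lt_tg); rewrite ler_pdivrMr //; lra.
move: tf_lt_t t_lt_tg; rewrite ltr_pdivrMr // ltr_pdivlMr // => ft gt.
by case: (cover t); rewrite ?t_ge0 ?t_le1 //; nra.
Qed.

Section ConvexAlternative.
Variables (R : realType) (T : lmodType R).

Definition convex_fn (f : T -> R) := forall x y (t : R), 0 <= t -> t <= 1 ->
  f (t *: x + (1 - t) *: y) <= t * f x + (1 - t) * f y.

Definition convex_set (D : set T) := forall x y (t : R), 0 <= t -> t <= 1 ->
  D x -> D y -> D (t *: x + (1 - t) *: y).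

Lemma convex_fn_comb (f g : T -> R) (l : R) : 0 <= l <= 1 ->
  convex_fn f -> convex_fn g -> convex_fn (fun u => l * f u + (1 - l) * g u).
Proof.
move=> /andP[l_ge0 l_le1] f_cvx g_cvx x y t t_ge0 t_le1.
have := ler_wpM2l l_ge0 (f_cvx x y t t_ge0 t_le1).
have l'_ge0 : 0 <= 1 - l by rewrite subr_ge0.
have := ler_wpM2l l'_ge0 (g_cvx x y t t_ge0 t_le1).
lra.
Qed.

Lemma convex_set_neg (I : Type) (P : I -> Prop) (F : I -> T -> R) :
  (forall i, convex_fn (F i)) -> convex_set [set u | forall i, P i -> F i u < 0].
Proof.
move=> F_cvx x y t t_ge0 t_le1 Fx Fy i Pi.
apply: le_lt_trans (F_cvx i x y t t_ge0 t_le1) _.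
by have := Fx i Pi; have := Fy i Pi; nra.
Qed.

Section TwoFunctions.
Variables (D : set T) (f g : T -> R).
Hypotheses (D_cvx : convex_set D) (f_cvx : convex_fn f) (g_cvx : convex_fn g).
Hypothesis max_ge0 : forall u, D u -> 0 <= f u \/ 0 <= g u.

Lemma f_ge0_of_g_lt0 u : D u -> g u < 0 -> 0 <= f u.
Proof. by move=> /max_ge0[] // ? ?; lra. Qed.

Lemma g_ge0_of_f_lt0 u : D u -> f u < 0 -> 0 <= g u.
Proof. by move=> /max_ge0[] // ? ?; lra. Qed.

(* [- g b / (f b - g b)] and [g a / (g a - f a)] are the weights [l] that make
   [l * f + (1 - l) * g] vanish at [b] and at [a]. *)
Lemma zero_weight_le a b : D a -> D b -> f a < 0 -> g b < 0 ->
  - g b / (f b - g b) <= g a / (g a - f a).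
Proof.
move=> Da Db fa_lt0 gb_lt0.
have ga_ge0 := g_ge0_of_f_lt0 Da fa_lt0.
have fb_ge0 := f_ge0_of_g_lt0 Db gb_lt0.
have cross : g b * f a <= f b * g a.
  apply: affine_cover_cross_le => // t /andP[t_ge0 t_le1].
  have [fab|gab] := max_ge0 (D_cvx t_ge0 t_le1 Da Db).
  - by left; apply: le_trans fab (f_cvx a b t_ge0 t_le1).
  - by right; apply: le_trans gab (g_cvx a b t_ge0 t_le1).
rewrite ler_pdivrMr; last lra.
rewrite mulrAC ler_pdivlMr; last lra.
nra.
Qed.

Lemma convex_comb_ge0 :
  exists l, 0 <= l <= 1 /\ forall u, D u -> 0 <= l * f u + (1 - l) * g u.
Proof.
pose S := [set x : R | x = 0 \/ exists2 b, D b /\ g b < 0 & x = - g b / (f b - g b)].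
have S_ub1 : ubound S 1.
  move=> _ [->|[b [Db gb_lt0] ->]]; first exact: ler01.
  by have fb_ge0 := f_ge0_of_g_lt0 Db gb_lt0; rewrite ler_pdivrMr; lra.
have S_ne : S !=set0 by exists 0; left.
have S_sup : has_sup S by split; [| exists 1].
have sup_ge0 : 0 <= sup S by apply: sup_upper_bound => //; left.
have sup_le1 : sup S <= 1 := ge_sup S_ne S_ub1.
exists (sup S); split; first by rewrite sup_ge0.
move=> u Du.
have [fu_lt0|fu_ge0] := ltP (f u) 0.
  have gu_ge0 := g_ge0_of_f_lt0 Du fu_lt0.
  have : sup S <= g u / (g u - f u).
    apply: ge_sup => // _ [->|[b [Db gb_lt0] ->]]; last exact: zero_weight_le.
    by rewrite divr_ge0 //; lra.
  by rewrite ler_pdivlMr; [nra | lra].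
have [gu_lt0|gu_ge0] := ltP (g u) 0; last by nra.
have : - g u / (f u - g u) <= sup S.
  by apply: sup_upper_bound => //; right; exists u.
by rewrite ler_pdivrMr; [nra | lra].
Qed.

End TwoFunctions.

Lemma convex_alternative_cons (I : eqType) (rest : seq I) (i0 : I) (F : I -> T -> R) :
  uniq (i0 :: rest) -> (forall i, convex_fn (F i)) ->
  (forall u, exists2 i, i \in i0 :: rest & 0 <= F i u) ->
  exists w : I -> R, [/\ forall i, 0 <= w i, forall i, i \notin i0 :: rest -> w i = 0,
    \sum_(i <- i0 :: rest) w i = 1 & forall u, 0 <= \sum_(i <- i0 :: rest) w i * F i u].
Proof.
elim: rest i0 F => [|g rest IH] i0 F uniq_s F_cvx cover.
  exists (fun i => (i == i0)%:R); split.
  - by move=> i; rewrite ler0n.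
  - by move=> i; rewrite inE => /negbTE ->.
  - by rewrite big_seq1 eqxx.
  - by move=> u; rewrite big_seq1 eqxx mul1r; have [i] := cover u; rewrite inE => /eqP ->.
move: uniq_s; rewrite /= !inE negb_or => /andP[/andP[i0_g i0_rest] /andP[g_rest uniq_rest]].
have rest_neq i : i \in rest -> (i == i0) = false /\ (i == g) = false.
  by move=> i_rest; split; apply: contraTF i_rest => /eqP->.
pose D := [set u | forall i, i \in rest -> F i u < 0].
have D_cover u : D u -> 0 <= F i0 u \/ 0 <= F g u.
  move=> Du; have [i] := cover u; rewrite !inE => /or3P[/eqP->|/eqP->|i_rest].
  - by left.
  - by right.
  - by have := Du i i_rest; lra.
have [l [l01 l_ge0]] :=
  convex_comb_ge0 (convex_set_neg (P := fun i => i \in rest) F_cvx) (F_cvx i0) (F_cvx g) D_cover.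
pose F' i := if i == i0 then fun u => l * F i0 u + (1 - l) * F g u else F i.
have F'_cvx i : convex_fn (F' i).
  by rewrite /F'; case: eqP => _ //; exact: convex_fn_comb.
have cover' u : exists2 i, i \in i0 :: rest & 0 <= F' i u.
  have [Du|/existsNP[i /not_implyP[i_rest /negP]]] := pselect (D u).
    by exists i0; rewrite ?mem_head // /F' eqxx; exact: l_ge0.
  rewrite -leNgt => Fi_ge0; exists i; first by rewrite inE i_rest orbT.
  by rewrite /F' (rest_neq i i_rest).1.
have [|w' [w'_ge0 w'_supp w'_sum w'_alt]] := IH i0 F' _ F'_cvx cover'.
  by rewrite /= i0_rest.
pose w i := if i == i0 then l * w' i0 else if i == g then (1 - l) * w' i0 else w' i.
have sum_w X : \sum_(i <- [:: i0, g & rest]) w i * X i =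
    w' i0 * (l * X i0 + (1 - l) * X g) + \sum_(i <- rest) w' i * X i.
  rewrite !big_cons /w eqxx eq_sym (negbTE i0_g) eqxx addrA.
  congr (_ + _); first by ring.
  by apply: eq_big_seq => i /rest_neq[-> ->].
exists w; split.
- move=> i; rewrite /w; case: ifP => _; first by rewrite mulr_ge0 ?(andP l01).1.
  by case: ifP => _ //; rewrite mulr_ge0 // subr_ge0 (andP l01).2.
- move=> i; rewrite !inE !negb_or => /and3P[/negbTE i_i0 /negbTE i_g i_rest].
  by rewrite /w i_i0 i_g w'_supp // inE i_i0.
- have := sum_w (fun=> 1); rewrite !(eq_bigr _ (fun _ _ => mulr1 _)) => ->.
  by rewrite !mulr1 subrKC mulr1 -w'_sum big_cons.
- move=> u; rewrite sum_w; have := w'_alt u; rewrite big_cons /F' eqxx.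
  by rewrite (eq_big_seq (fun i => w' i * F i u)) // => i /rest_neq[->].
Qed.

Lemma convex_alternative (I : finType) (A : {set I}) (F : I -> T -> R) :
  (forall i, convex_fn (F i)) -> (forall u, exists2 i, i \in A & 0 <= F i u) ->
  exists w : I -> R, [/\ forall i, 0 <= w i, forall i, i \notin A -> w i = 0,
    \sum_i w i = 1 & forall u, 0 <= \sum_i w i * F i u].
Proof.
move=> F_cvx cover.
have cover_enum u : exists2 i, i \in enum A & 0 <= F i u.
  by have [i Ai] := cover u; exists i; rewrite ?mem_enum.
have := enum_uniq A; case E: (enum A) cover_enum => [|i0 rest] cover_s uniq_s.
  by have [] := cover_s 0.
have [w [w_ge0 w_supp w_sum w_alt]] := convex_alternative_cons uniq_s F_cvx cover_s.
have w_suppA i : i \notin A -> w i = 0 by rewrite -mem_enum E; exact: w_supp.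
have sum_A X : \sum_i w i * X i = \sum_(i <- i0 :: rest) w i * X i.
  rewrite -E big_enum /= [LHS](bigID (mem A)) /= [X in _ + X]big1 ?addr0 //.
  by move=> i /w_suppA->; rewrite mul0r.
exists w; split => // [|u]; last by rewrite sum_A.
by have := sum_A (fun=> 1); rewrite !(eq_bigr _ (fun _ _ => mulr1 _)) => ->.
Qed.

End ConvexAlternative.

Lemma saddle_inf_sup (R : realType) (P U : Type) (SP : set P) (SU : set U)
    (phi : P -> U -> R) (ps : P) (us : U) : SP ps -> SU us ->
  (forall p, SP p -> phi p us <= phi ps us) ->
  (forall u, SU u -> phi ps us <= phi ps u) ->
  ereal_inf [set ereal_sup [set (phi p u)%:E | p in SP] | u in SU] = (phi ps us)%:E.
Proof.
move=> SPps SUus max_p min_u; apply/eqP; rewrite eq_le; apply/andP; split.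
- apply: ge_ereal_inf; exists (ereal_sup [set (phi p us)%:E | p in SP]); first by exists us.
  by apply: ge_ereal_sup => _ [p SPp <-]; rewrite lee_fin max_p.
- apply: le_ereal_inf_tmp => _ [u SUu <-].
  by apply: le_ereal_sup_tmp; exists (phi ps u)%:E; [exists ps | rewrite lee_fin min_u].
Qed.

Lemma saddle_sup_inf (R : realType) (P U : Type) (SP : set P) (SU : set U)
    (phi : P -> U -> R) (ps : P) (us : U) : SP ps -> SU us ->
  (forall p, SP p -> phi p us <= phi ps us) ->
  (forall u, SU u -> phi ps us <= phi ps u) ->
  ereal_sup [set ereal_inf [set (phi p u)%:E | u in SU] | p in SP] = (phi ps us)%:E.
Proof.
move=> SPps SUus max_p min_u; apply/eqP; rewrite eq_le; apply/andP; split.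
- apply: ge_ereal_sup => _ [p SPp <-].
  by apply: ge_ereal_inf; exists (phi p us)%:E; [exists us | rewrite lee_fin max_p].
- apply: le_ereal_sup_tmp; exists (ereal_inf [set (phi ps u)%:E | u in SU]); first by exists ps.
  by apply: le_ereal_inf_tmp => _ [u SUu <-]; rewrite lee_fin min_u.
Qed.

Lemma row_simplex (R : realType) (N : nat) (w : 'I_N -> R) :
  (forall i, 0 <= w i) -> \sum_i w i = 1 -> \row_j w j \in @simplex R N.
Proof.
move=> w_ge0 w_sum; rewrite inE; split => [j|]; last first.
  by rewrite -w_sum; apply: eq_bigr => j _; rewrite mxE.
by rewrite mxE w_ge0 -w_sum (bigD1 j) //= lerDl sumr_ge0.
Qed.

Lemma simplex_vertex (R : realType) (N : nat) (p : 'rV[R]_N) :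
  p \in @simplex R N -> ~ non_pure p -> exists i, forall j, p 0 j = (i == j)%:R.
Proof.
rewrite inE => -[p01 p_sum] pure.
have p_ge0 j : 0 <= p 0 j by have /andP[] := p01 j.
have p_eq0 j : ~~ (0 < p 0 j) -> p 0 j = 0.
  by rewrite lt_def p_ge0 andbT negbK => /eqP.
have [i pi_gt0] : exists i, 0 < p 0 i.
  apply: contrapT => no_pos; move: p_sum; rewrite big1 => [/eqP|j _].
    by rewrite eq_sym oner_eq0.
  by apply/p_eq0/negP => pj_gt0; apply: no_pos; exists j.
have p_off j : i != j -> p 0 j = 0.
  by move=> ij; apply/p_eq0/negP => pj_gt0; apply: pure; exists i, j.
have pi1 : p 0 i = 1.
  by rewrite -p_sum (bigD1 i) //= big1 ?addr0 // => j ji; rewrite p_off // eq_sym.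
by exists i => j; have [<-|/p_off] := eqVneq i j.
Qed.

Lemma pdot_vertex (R : realType) (m N : nat) (p : 'rV[R]_N)
    (H : 'I_N -> 'rV[R]_m -> R) (i : 'I_N) u :
  (forall j, p 0 j = (i == j)%:R) -> pdot p H u = H i u.
Proof.
move=> pE; rewrite /pdot (bigD1 i) //= big1 ?addr0 => [|j ji].
  by rewrite pE eqxx mul1r.
by rewrite pE eq_sym (negbTE ji) mul0r.
Qed.

Lemma pdot_simplex_le (R : realType) (m N : nat) (p : 'rV[R]_N)
    (H : 'I_N -> 'rV[R]_m -> R) u c :
  p \in @simplex R N -> (forall j, H j u <= c) -> pdot p H u <= c.
Proof.
rewrite inE => -[p01 p_sum] H_le; rewrite /pdot -[leRHS]mul1r -p_sum mulr_suml.
by apply: ler_sum => j _; rewrite ler_wpM2l // (andP (p01 j)).1.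
Qed.

Lemma simplex_alternative (R : realType) (m N : nat) (H : 'I_N -> 'rV[R]_m -> R)
    (A : {set 'I_N}) (c : R) :
  (forall i, convex_fun (H i)) -> (forall u, exists2 i, i \in A & c <= H i u) ->
  exists2 p, p \in @simplex R N & supp p \subset A /\ forall u, c <= pdot p H u.
Proof.
move=> H_cvx cover; pose F i u := H i u - c.
have F_cvx i : convex_fn (F i).
  by move=> x y t t_ge0 t_le1; have := H_cvx i x y t t_ge0 t_le1; rewrite /F; lra.
have F_cover u : exists2 i, i \in A & 0 <= F i u.
  by have [i Ai c_le] := cover u; exists i; rewrite // subr_ge0.
have [w [w_ge0 w_supp w_sum w_alt]] := convex_alternative F_cvx F_cover.
have wE j : (\row_j w j) 0 j = w j by rewrite mxE.
exists (\row_j w j); first exact: row_simplex.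
split=> [|u].
  by apply/fintype.subsetP => j; rewrite inE wE; apply: contraTT => /w_supp->; rewrite ltxx.
rewrite /pdot (eq_bigr (fun j => w j * H j u)) => [|j _]; last by rewrite wE.
have := w_alt u; rewrite /F (eq_bigr _ (fun i _ => mulrBr (w i) (H i u) c)).
by rewrite sumrB -mulr_suml w_sum mul1r subr_ge0.
Qed.

Theorem lemma1 (R : realType) (m N : nat) (H : 'I_N -> 'rV[R]_m -> R)
  (hconv : forall i, convex_fun (H i))
  (ustar : 'rV[R]_m) (G : {set 'I_N})
  (hG : (2 <= #|G|)%N)
  (ha : forall i, i \in G -> forall j : 'I_N, H j ustar <= H i ustar)
  (hb : forall u, u != ustar -> exists2 i, i \in G & H i ustar < H i u)
  (hc : forall i, i \in G -> ~ (forall u, H i ustar <= H i u)) :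
  exists pstar : 'rV[R]_N,
    [/\ pstar \in @simplex R N, non_pure pstar, supp pstar \subset G,
        ereal_inf [set ereal_sup [set (pdot p H u)%:E | p in @simplex R N]
                  | u in [set: 'rV[R]_m]] = (pdot pstar H ustar)%:E
      & (pdot pstar H ustar)%:E =
        ereal_sup [set ereal_inf [set (pdot p H u)%:E | u in [set: 'rV[R]_m]]
                  | p in @simplex R N]].
Proof.
have [i1 G_i1] : exists i1, i1 \in G by apply/card_gt0P; rewrite (leq_trans _ hG).
pose c := H i1 ustar.
have H_le_c j : H j ustar <= c := ha i1 G_i1 j.
have H_eq_c i : i \in G -> H i ustar = c.
  by move=> Gi; apply/eqP; rewrite eq_le H_le_c ha.
have cover u : exists2 i, i \in G & c <= H i u.
  have [->|/hb[i Gi Hi_gt]] := eqVneq u ustar; first by exists i1.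
  by exists i; rewrite // -(H_eq_c i Gi) ltW.
have [pstar pstar_simplex [supp_G pstar_ge]] := simplex_alternative hconv cover.
have pstar_val : pdot pstar H ustar = c.
  by apply/eqP; rewrite eq_le pstar_ge pdot_simplex_le.
have pstar_S : simplex pstar by rewrite -in_setE.
have max_p p : simplex p -> pdot p H ustar <= pdot pstar H ustar.
  by move=> /mem_set p_S; rewrite pstar_val pdot_simplex_le.
have min_u u : [set: 'rV[R]_m] u -> pdot pstar H ustar <= pdot pstar H u.
  by rewrite pstar_val.
exists pstar; split => //.
- have [//|pure] := pselect (non_pure pstar); exfalso.
  have [i pstar_vertex] := simplex_vertex pstar_simplex pure.
  have Gi : i \in G by apply/(fintype.subsetP supp_G); rewrite inE pstar_vertex eqxx ltr01.
  apply: (hc i Gi) => u; rewrite H_eq_c // -(pdot_vertex H u pstar_vertex); exact: pstar_ge.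
- exact: (saddle_inf_sup (phi := fun p u => pdot p H u) pstar_S I max_p min_u).
- exact/esym/(saddle_sup_inf (phi := fun p u => pdot p H u) pstar_S I max_p min_u).
Qed.
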